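(* If $\mathfrak{X}$ is a finite co-tree which validates $\mathcal{J}(\mathfrak{F}_3)$, then every point $x\in X$ has at most $2$ immediate predecessors.
   Context: A co-tree is a poset with a greatest element in which every principal upset $\uparrow x$ is a chain. An immediate predecessor of $x$ is a point $y<x$ such that no $z$ satisfies $y<z<x$. $\mathfrak{F}_3$ is the four-element co-tree with top $a$ and three pairwise incomparable minimal points $b,c,d$ below $a$. For a finite co-tree $\mathfrak{Y}$, the Jankov formula $\mathcal{J}(\mathfrak{Y})$ is a bi-intuitionistic formula with the property that a finite co-tree $\mathfrak{X}$ (viewed as a Kripke frame, with $\leftarrow$ interpreted by $x\models\varphi\leftarrow\psi$ iff there is $y\le x$ with $y\models\varphi$ and $y\not\models\psi$) refutes $\mathcal{J}(\mathfrak{Y})$ iff there is a surjective bi-p-morphism $\mathfrak{X}\to\mathfrak{Y}$. A bi-p-morphism is an order-preserving map $f$ such that $f(x)\le y$ implies $y=f(z)$ for some $z\ge x$, and $y\le f(x)$ implies $y=f(z)$ for some $z\le x$. *)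

From mathcomp Require Import all_boot.
Set Implicit Arguments. Unset Strict Implicit. Unset Printing Implicit Defensive.

Definition is_poset (T : finType) (le : rel T) : Prop :=
  [/\ reflexive le, antisymmetric le & transitive le].

Definition is_cotree (T : finType) (le : rel T) : Prop :=
  [/\ is_poset le,
      (exists t : T, forall x, le x t) &
      (forall x y z : T, le x y -> le x z -> le y z || le z y)].

Definition imm_pred (T : finType) (le : rel T) (y x : T) : bool :=
  [&& le y x, y != x &
      ~~ [exists z, [&& le y z, z != y, le z x & z != x]]].

Inductive biform : Type :=
| BVar : nat -> biform
| BBot : biform
| BTop : biform
| BAnd : biform -> biform -> biform
| BOr  : biform -> biform -> biform
| BImp : biform -> biform -> biform
| BCoimp : biform -> biform -> biform.

Definition is_valuation (T : finType) (le : rel T) (V : nat -> T -> bool) : Prop :=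
  forall p x y, le x y -> V p x -> V p y.

Fixpoint sat (T : finType) (le : rel T) (V : nat -> T -> bool) (phi : biform) (x : T) : Prop :=
  match phi with
  | BVar p => V p x
  | BBot => False
  | BTop => True
  | BAnd a b => sat le V a x /\ sat le V b x
  | BOr a b => sat le V a x \/ sat le V b x
  | BImp a b => forall y, le x y -> sat le V a y -> sat le V b y
  | BCoimp a b => exists y, le y x /\ sat le V a y /\ ~ sat le V b y
  end.

Definition validates (T : finType) (le : rel T) (phi : biform) : Prop :=
  forall V, is_valuation le V -> forall x, sat le V phi x.

Definition refutes (T : finType) (le : rel T) (phi : biform) : Prop :=
  exists V, is_valuation le V /\ exists x, ~ sat le V phi x.

Definition bi_p_morphism (T : finType) (le : rel T) (U : finType) (leU : rel U)
    (f : T -> U) : Prop :=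
  [/\ (forall x y, le x y -> leU (f x) (f y)),
      (forall x u, leU (f x) u -> exists z, le x z /\ f z = u) &
      (forall x u, leU u (f x) -> exists z, le z x /\ f z = u)].

(* The frame F_3 on 'I_4: point 0 is the top a; 1, 2, 3 are b, c, d. *)
Definition F3_le : rel 'I_4 := fun i j => (i == j) || (j == ord0).

(* phi behaves like the Jankov formula J(F_3) on finite co-trees *)
Definition jankov_F3_like (phi : biform) : Prop :=
  forall (T : finType) (le : rel T), is_cotree le ->
    (refutes le phi <->
     exists f : T -> 'I_4, bi_p_morphism le F3_le f /\ (forall u : 'I_4, exists x, f x = u)).

(* Three distinct immediate predecessors y1, y2, y3 of a point x yield a
   surjective bi-p-morphism onto F_3: send the upset of x to the top a, the
   downsets of y1 and y2 to b and c, and everything else to d.  Since every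
   principal upset is a chain, a point below y_i stays below y_i when moving up
   without reaching x, which makes the map order preserving; the back condition
   holds because all of x, y1, y2, y3 lie below every point of the upset of x.
   Hence X refutes J(F_3), contradicting its validity. *)
From mathcomp Require Import all_boot.

Set Implicit Arguments.
Unset Strict Implicit.
Unset Printing Implicit Defensive.

Definition F3_b : 'I_4 := @Ordinal 4 1 isT.
Definition F3_c : 'I_4 := @Ordinal 4 2 isT.
Definition F3_d : 'I_4 := @Ordinal 4 3 isT.

Lemma validates_refutes_false (T : finType) (le : rel T) (phi : biform) :
  validates le phi -> refutes le phi -> False.
Proof. by move=> valid [V [HV [x nx]]]; apply: nx; apply: valid. Qed.

Section ImmediatePredecessors.
Variables (X : finType) (le : rel X).

Lemma imm_pred_le y x : imm_pred le y x -> le y x.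
Proof. by case/and3P. Qed.

Lemma imm_pred_between y x w :
  imm_pred le y x -> le y w -> le w x -> w = y \/ w = x.
Proof.
case/and3P=> _ _ /existsPn/(_ w) + yw wx.
by rewrite yw wx /= negb_and !negbK => /orP[] /eqP ->; [left | right].
Qed.

Hypothesis HX : is_cotree le.

Let cotree_refl : reflexive le. Proof. by case: HX => [[]]. Qed.
Let cotree_antisym : antisymmetric le. Proof. by case: HX => [[]]. Qed.
Let cotree_trans : transitive le. Proof. by case: HX => [[]]. Qed.
Let cotree_upset_chain x y z : le x y -> le x z -> le y z || le z y.
Proof. by case: HX => _ _; apply. Qed.

Lemma imm_pred_not_ge y x : imm_pred le y x -> ~~ le x y.
Proof.
case/and3P=> yx /eqP neq_yx _; apply/negP=> xy.
by apply: neq_yx; apply: cotree_antisym; rewrite yx xy.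
Qed.

Lemma imm_pred_down_stable y x z w :
  imm_pred le y x -> le z w -> ~~ le x w -> le z y = le w y.
Proof.
move=> hy zw nxw; apply/idP/idP => [zy | wy]; last exact: cotree_trans wy.
case/orP: (cotree_upset_chain zy zw) => // yw.
case/orP: (cotree_upset_chain (imm_pred_le hy) yw) => [xw | wx].
  by rewrite xw in nxw.
by move: nxw; case: (imm_pred_between hy yw wx) => ->; rewrite cotree_refl.
Qed.

Lemma imm_pred_no_common_lower y1 y2 x z :
  imm_pred le y1 x -> imm_pred le y2 x -> y1 != y2 ->
  le z y1 -> le z y2 -> False.
Proof.
move=> h1 h2 /eqP neq12 zy1 zy2; apply: neq12; apply: cotree_antisym.
rewrite -(imm_pred_down_stable h2 zy1 (imm_pred_not_ge h1)) zy2.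
by rewrite -(imm_pred_down_stable h1 zy2 (imm_pred_not_ge h2)) zy1.
Qed.

Section Collapse.
Variables (x y1 y2 y3 : X).
Hypotheses (h1 : imm_pred le y1 x) (h2 : imm_pred le y2 x) (h3 : imm_pred le y3 x).
Hypotheses (n12 : y1 != y2) (n13 : y1 != y3) (n23 : y2 != y3).

Definition F3_collapse (z : X) : 'I_4 :=
  if le x z then ord0 else if le z y1 then F3_b else if le z y2 then F3_c
  else F3_d.

Lemma F3_collapse_eq_top z : (F3_collapse z == ord0) = le x z.
Proof. by rewrite /F3_collapse; do 3 case: ifP => //. Qed.

Lemma F3_collapse_local z w :
  le z w -> ~~ le x w -> F3_collapse z = F3_collapse w.
Proof.
move=> zw nxw; have nxz : ~~ le x z.
  by apply: contra nxw => xz; apply: cotree_trans zw.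
rewrite /F3_collapse (negbTE nxz) (negbTE nxw).
by rewrite (imm_pred_down_stable h1 zw nxw) (imm_pred_down_stable h2 zw nxw).
Qed.

Lemma F3_collapse_onto_below u : exists2 y, le y x & F3_collapse y = u.
Proof.
have nxy1 := negbTE (imm_pred_not_ge h1).
have nxy2 := negbTE (imm_pred_not_ge h2).
have nxy3 := negbTE (imm_pred_not_ge h3).
have ny21 : le y2 y1 = false.
  by apply/negP=> /(imm_pred_no_common_lower h1 h2 n12); apply.
have ny31 : le y3 y1 = false.
  by apply/negP=> /(imm_pred_no_common_lower h1 h3 n13); apply.
have ny32 : le y3 y2 = false.
  by apply/negP=> /(imm_pred_no_common_lower h2 h3 n23); apply.
rewrite /F3_collapse; case: u => -[|[|[|[|//]]]] lt_u4.
- by exists x; rewrite // cotree_refl; apply: val_inj.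
- exists y1; first exact: imm_pred_le h1.
  by rewrite nxy1 cotree_refl; apply: val_inj.
- exists y2; first exact: imm_pred_le h2.
  by rewrite nxy2 ny21 cotree_refl; apply: val_inj.
- exists y3; first exact: imm_pred_le h3.
  by rewrite nxy3 ny31 ny32; apply: val_inj.
Qed.

Lemma F3_collapse_bi_p_morphism : bi_p_morphism le F3_le F3_collapse.
Proof.
have [_ [t top] _] := HX.
split=> [z w zw | z u | z u]; rewrite /F3_le.
- have [xw | nxw] := boolP (le x w).
    by apply/orP; right; rewrite F3_collapse_eq_top.
  by rewrite (F3_collapse_local zw nxw) eqxx.
- case/orP=> [/eqP <- | /eqP ->]; first by exists z.
  by exists t; split; last by apply/eqP; rewrite F3_collapse_eq_top.
- case/orP=> [/eqP -> | ]; first by exists z.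
  rewrite F3_collapse_eq_top => xz.
  have [y yx <-] := F3_collapse_onto_below u.
  by exists y; split; last by []; apply: cotree_trans xz.
Qed.

Lemma F3_surjective_image :
  exists f : X -> 'I_4, bi_p_morphism le F3_le f /\ (forall u, exists z, f z = u).
Proof.
exists F3_collapse; split; first exact: F3_collapse_bi_p_morphism.
by move=> u; have [y _ fy] := F3_collapse_onto_below u; exists y.
Qed.

End Collapse.

End ImmediatePredecessors.

Theorem lemma3p8 (phi : biform) (Hphi : jankov_F3_like phi)
  (X : finType) (le : rel X) (HX : is_cotree le) (Hval : validates le phi) :
  forall x : X, #|[set y | imm_pred le y x]| <= 2.
Proof.
move=> x; rewrite leqNgt; apply/negP.
case/card_gt2P=> [y1 [y2 [y3 [[i1 i2 i3] [n12 n23 n31]]]]].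
rewrite !inE in i1 i2 i3.
apply: (validates_refutes_false Hval); apply/(Hphi X le HX).
by apply: (F3_surjective_image HX i1 i2 i3); rewrite // eq_sym.
Qed.
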